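(* Let $\mathcal{Y}=\{1,\dots,m\}$ be a finite set of classes and $\Delta(\mathcal{Y})$ the set of probability vectors on $\mathcal{Y}$. Let $u:\mathcal{Y}\times\mathcal{Y}\to\mathbb{R}_+$ be nonnegative and nondegenerate (for every $y$ there is $a$ with $u(a,y)>0$), and suppose the $m\times m$ matrix $U$ with entries $U_{y',y}=u(y',y)$ is invertible, with inverse $U^{-1}$. Let $\ell$ be a strictly proper loss function. Let $p^u:\Delta(\mathcal{Y})\to\Delta(\mathcal{Y})$ be the optimal utility-weighted prediction function, $p^u_y(q)=\bar u(y,q)/\sum_{y'}\bar u(y',q)$ where $\bar u(y,q)=\sum_{y'}u(y,y')q_{y'}$. Then $p^u$ is invertible, with closed-form inverse (on its image) $$[p^u_y]^{-1}(p)=\frac{\bar u^{-1}(y,p)}{\sum_{y'\in\mathcal{Y}}\bar u^{-1}(y',p)},$$ where $\bar u^{-1}(y,p)\equiv\sum_{y'\in\mathcal{Y}}(U^{-1})_{y,y'}\,p_{y'}$ is the expected utility of $y$ given $p$ under the (inverse) utility function defined by the matrix $U^{-1}$.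
   Context: A loss $\ell:\Delta(\mathcal{Y})\times\mathcal{Y}\to\mathbb{R}$ is strictly proper if for every $q\in\Delta(\mathcal{Y})$, $q$ is the unique minimizer over $p\in\Delta(\mathcal{Y})$ of $\sum_y q_y\ell(p,y)$; under this assumption $p^u(q)$ is the unique minimizer of $p\mapsto\sum_y q_y\sum_{y'}\ell(p,y')u(y',y)$. *)

From HB Require Import structures.
From mathcomp Require Import all_boot all_order all_algebra.
Set Implicit Arguments. Unset Strict Implicit. Unset Printing Implicit Defensive.
Import Order.TTheory GRing.Theory Num.Theory.
Local Open Scope ring_scope.

Section Defs.
Variables (R : realFieldType) (m : nat).

Definition prob_vec (q : 'I_m -> R) : Prop :=
  (forall y, 0 <= q y) /\ \sum_(y < m) q y = 1.

Definition umx (u : 'I_m -> 'I_m -> R) : 'M[R]_m := \matrix_(i, j) u i j.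

Definition ubar (u : 'I_m -> 'I_m -> R) (q : 'I_m -> R) (y : 'I_m) : R :=
  \sum_(y' < m) u y y' * q y'.

Definition pu (u : 'I_m -> 'I_m -> R) (q : 'I_m -> R) : 'I_m -> R :=
  fun y => ubar u q y / \sum_(y' < m) ubar u q y'.

Definition ubar_inv (u : 'I_m -> 'I_m -> R) (p : 'I_m -> R) (y : 'I_m) : R :=
  \sum_(y' < m) (invmx (umx u)) y y' * p y'.

Definition pu_inv (u : 'I_m -> 'I_m -> R) (p : 'I_m -> R) : 'I_m -> R :=
  fun y => ubar_inv u p y / \sum_(y' < m) ubar_inv u p y'.

Definition strictly_proper (l : ('I_m -> R) -> 'I_m -> R) : Prop :=
  forall q, prob_vec q ->
    (forall p, prob_vec p ->
       \sum_(y < m) q y * l q y <= \sum_(y < m) q y * l p y) /\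
    (forall p, prob_vec p ->
       \sum_(y < m) q y * l p y <= \sum_(y < m) q y * l q y ->
       forall y, p y = q y).
End Defs.

From HB Require Import structures.
From mathcomp Require Import all_boot all_order all_algebra.
Import Order.TTheory GRing.Theory Num.Theory.
Local Open Scope ring_scope.

(* In matrix form ubar u q = U q, so ubar_inv undoes ubar, and p^u(q) is U q
   rescaled by 1 / sum_y (U q)_y, a scalar that is positive because u is
   nonnegative and no column of U vanishes.  The closed form is
   invariant under rescaling its argument and renormalises U^{-1} U q = q to
   total mass 1, which q already has. *)

Lemma prob_vec_exists_gt0 {R : realFieldType} {m : nat} {q : 'I_m -> R} :
  prob_vec q -> exists k, 0 < q k.
Proof.
move=> [_ q_sum1]; apply/existsP; apply: contraT; rewrite negb_exists.
move=> /forallP q_le0; have : \sum_(y < m) q y <= 0.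
  by rewrite sumr_le0 // => i _; rewrite leNgt q_le0.
by rewrite q_sum1 ler10.
Qed.

Section UtilityInverse.
Variables (R : realFieldType) (m : nat) (u : 'I_m -> 'I_m -> R).

Lemma ubar_mx q y : ubar u q y = (umx u *m \col_j q j) y ord0.
Proof. by rewrite mxE; apply: eq_bigr => k _; rewrite !mxE. Qed.

Lemma ubar_inv_mx p y : ubar_inv u p y = (invmx (umx u) *m \col_j p j) y ord0.
Proof. by rewrite mxE; apply: eq_bigr => k _; rewrite mxE. Qed.

Lemma ubar_invK q : umx u \in unitmx -> ubar_inv u (ubar u q) =1 q.
Proof.
move=> U_unit y; rewrite ubar_inv_mx.
have -> : \col_j ubar u q j = umx u *m \col_j q j.
  by apply/matrixP => i j; rewrite ord1 mxE ubar_mx.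
by rewrite mulKmx // mxE.
Qed.

Lemma ubar_invZ p c y : ubar_inv u (fun i => p i * c) y = ubar_inv u p y * c.
Proof. by rewrite /ubar_inv mulr_suml; apply: eq_bigr => k _; rewrite mulrA. Qed.

Lemma eq_ubar_inv p1 p2 : p1 =1 p2 -> ubar_inv u p1 =1 ubar_inv u p2.
Proof. by move=> eq_p y; apply: eq_bigr => k _; rewrite eq_p. Qed.

Lemma eq_pu_inv p1 p2 : p1 =1 p2 -> pu_inv u p1 =1 pu_inv u p2.
Proof.
move=> /eq_ubar_inv eq_p y; rewrite /pu_inv eq_p.
by congr (_ / _); apply: eq_bigr => k _.
Qed.

Lemma pu_invZ p c : c != 0 -> pu_inv u (fun i => p i * c) =1 pu_inv u p.
Proof.
move=> c_neq0 y; rewrite /pu_inv ubar_invZ.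
under eq_bigr do rewrite ubar_invZ.
by rewrite -mulr_suml invfM mulrACA divff // mulr1.
Qed.

Lemma sum_ubar q :
  \sum_(y < m) ubar u q y = \sum_(k < m) q k * \sum_(a < m) u a k.
Proof.
rewrite exchange_big; apply: eq_bigr => k _.
by rewrite mulr_sumr; apply: eq_bigr => a _; rewrite mulrC.
Qed.

Lemma sum_ubar_gt0 q :
  (forall a y, 0 <= u a y) -> (forall y, exists a, 0 < u a y) ->
  prob_vec q -> 0 < \sum_(y < m) ubar u q y.
Proof.
move=> u_ge0 u_nondeg q_prob; rewrite sum_ubar.
have [k qk_gt0] := prob_vec_exists_gt0 q_prob.
have [a uak_gt0] := u_nondeg k.
have col_gt0 : 0 < \sum_(i < m) u i k.
  by rewrite (bigD1 a) //= ltr_wpDr ?sumr_ge0.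
rewrite (bigD1 k) //= ltr_wpDr ?mulr_gt0 // sumr_ge0 // => j _.
by rewrite mulr_ge0 ?sumr_ge0 ?q_prob.1.
Qed.

Lemma pu_invK q :
  umx u \in unitmx -> \sum_(y < m) q y = 1 -> \sum_(y < m) ubar u q y != 0 ->
  pu_inv u (pu u q) =1 q.
Proof.
move=> U_unit q_sum1 S_neq0 y.
rewrite /pu (pu_invZ _ _ (invr_neq0 S_neq0)) /pu_inv.
under eq_bigr do rewrite ubar_invK //.
by rewrite ubar_invK // q_sum1 divr1.
Qed.

End UtilityInverse.

Theorem theorem2 (R : realFieldType) (m : nat)
    (u : 'I_m -> 'I_m -> R) (l : ('I_m -> R) -> 'I_m -> R) :
  (forall a y, 0 <= u a y) ->
  (forall y, exists a, 0 < u a y) ->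
  umx u \in unitmx ->
  strictly_proper l ->
  (* p^u is injective on Delta(Y) *)
  (forall q1 q2, prob_vec q1 -> prob_vec q2 ->
     (forall y, pu u q1 y = pu u q2 y) -> forall y, q1 y = q2 y) /\
  (* and the closed form inverts it on its image *)
  (forall q, prob_vec q -> forall y, pu_inv u (pu u q) y = q y).
Proof.
(* Strict propriety only makes p^u the Bayes-optimal prediction; the
   inversion itself does not depend on the loss. *)
move=> u_ge0 u_nondeg U_unit _.
have pu_invK_prob q : prob_vec q -> pu_inv u (pu u q) =1 q.
  move=> q_prob; apply: pu_invK => //; first exact: q_prob.2.
  exact/lt0r_neq0/sum_ubar_gt0.
split=> // q1 q2 q1_prob q2_prob eq_pu y.
by rewrite -(pu_invK_prob _ q1_prob) -(pu_invK_prob _ q2_prob); apply: eq_pu_inv.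
Qed.
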